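(* Let $G=(V,E)$ be an undirected graph (not necessarily locally finite), let $X\subset V$ with $\mathrm{width}(X)<+\infty$, let $f:X\to\mathbb{R}$ with $f\ge 0$, and let $u,v:V\to\mathbb{R}$ satisfy $v\ge -C$ and $u\le C$ on $V$ for some constant $C>0$. Suppose that \[ -\Delta_\infty v(x)\ \ge\ f(x)\ \ge\ -\Delta_\infty u(x)\qquad\text{for all } x\in X. \] Then $\sup_{V}(u-v)=\sup_{V\setminus X}(u-v)$.
   Context: For $x,y\in V$ write $x\sim y$ if $\{x,y\}\in E$. The combinatorial distance $d(A,B)$ between subsets $A,B\subset V$ is the infimum of the lengths $n$ of paths $A\ni x_0\sim x_1\sim\cdots\sim x_n\in B$ (and $d(A,x)=d(A,\{x\})$). The boundary of $X$ is $\partial X=\{y\notin X:\ y\sim x \text{ for some } x\in X\}$, and $\mathrm{width}(X)=\sup_{x\in X} d(\partial X,x)$. For $w:V\to\mathbb{R}$ the discrete infinity Laplacian is $\Delta_\infty w(x)=\inf_{y\sim x}w(y)+\sup_{y\sim x}w(y)-2w(x)$ (infima and suprema taken in the extended reals). *)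

From HB Require Import structures.
From mathcomp Require Import all_boot all_order all_algebra.
From mathcomp Require Import all_classical all_reals.
From mathcomp Require Import ereal.
Set Implicit Arguments. Unset Strict Implicit. Unset Printing Implicit Defensive.
Import Order.TTheory GRing.Theory Num.Theory.
Local Open Scope classical_set_scope.
Local Open Scope ring_scope.

Section GraphDefs.
Variables (R : realType) (V : Type).
Variable adj : V -> V -> Prop.

Definition walk (A B : set V) (n : nat) : Prop :=
  exists p : nat -> V, A (p 0%N) /\ B (p n) /\ (forall i, (i < n)%N -> adj (p i) (p i.+1)).

Definition gdist (A B : set V) : \bar R :=
  ereal_inf [set ((n%:R : R)%:E) | n in walk A B].

Definition boundary (X : set V) : set V :=
  [set y | ~ X y /\ exists x, X x /\ adj y x].

Definition width (X : set V) : \bar R :=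
  ereal_sup [set gdist (boundary X) [set x] | x in X].

Definition inf_lap (w : V -> R) (x : V) : \bar R :=
  (ereal_inf [set (w y)%:E | y in adj x] + ereal_sup [set (w y)%:E | y in adj x]
   - (2 * w x)%:E)%E.
End GraphDefs.

From HB Require Import structures.
From mathcomp Require Import all_boot all_order all_algebra.
From mathcomp Require Import all_classical all_reals.
From mathcomp Require Import ereal.
From mathcomp Require Import ring lra.
Import Order.TTheory GRing.Theory Num.Theory.
Local Open Scope classical_set_scope.
Local Open Scope ring_scope.

(* Perturb the supersolution to [phi v = v + eps * sat (v + C)], where
   [sat s = s / (s + 1)] is increasing, bounded by 1 and strictly concave; this
   makes [phi v] a strict supersolution, with a gain proportional to the square
   of the spread [v x - inf_{y ~ x} v y].  Let [M] be the supremum of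
   [gap = u - phi v].  At a point of [X] where [gap] is within [rho] of [M],
   comparing the two Laplacian inequalities forces the spread to be small, and
   then [gap] is within [eta] of [M] at every neighbour.  Iterating along a path
   of length at most [width X] to the boundary gives a point outside [X] where
   [gap] is almost [M]; as [0 <= phi v - v <= eps], letting [eps] go to [0]
   concludes. *)

Section Saturation.
Context {R : realFieldType}.
Implicit Types s t p A : R.

Definition sat s := s / (s + 1).

Lemma sat_ge0 {s} : 0 <= s -> 0 <= sat s.
Proof. by move=> s0; rewrite divr_ge0 //; lra. Qed.

Lemma sat_le1 {s} : 0 <= s -> sat s <= 1.
Proof. by move=> s0; rewrite ler_pdivrMr; lra. Qed.

Lemma satB {s t} : 0 <= s -> 0 <= t -> sat t - sat s = (t - s) / ((s + 1) * (t + 1)).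
Proof. by move=> s0 t0; rewrite /sat; field; apply/andP; split; lra. Qed.

Lemma ler_sat {s t} : 0 <= s -> s <= t -> sat s <= sat t.
Proof.
move=> s0 st; rewrite -subr_ge0 satB; try lra.
by rewrite divr_ge0 ?mulr_ge0; lra.
Qed.

Lemma sat_lipschitz {s t} : 0 <= s -> s <= t -> sat t - sat s <= t - s.
Proof.
move=> s0 st; rewrite satB; try lra.
rewrite ler_pdivrMr; last by rewrite mulr_gt0; lra.
have : 1 <= (s + 1) * (t + 1) by nra.
nra.
Qed.

(* Quantitative strict concavity of [sat] on [0, A - 1]. *)
Lemma sat_second_diff {s p A} : 0 <= p -> p <= s -> s + 1 <= A ->
  p ^+ 2 <= A ^+ 3 * (2 * sat s - sat (s - p) - sat (s + p)).
Proof.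
move=> p0 ps sA.
set D := (s + 1) * (s - p + 1) * (s + p + 1).
have D0 : 0 < D by rewrite !mulr_gt0; lra.
have -> : 2 * sat s - sat (s - p) - sat (s + p) = 2 * p ^+ 2 / D.
  by rewrite /sat /D; field; apply/and3P; split; apply/eqP; lra.
have DA : D <= 2 * A ^+ 3.
  have h1 : (s + 1) * (s - p + 1) <= A * A by apply: ler_pM; lra.
  have h2 : D <= A * A * (2 * A) by apply: ler_pM; rewrite ?mulr_ge0; lra.
  by rewrite exprS expr2; lra.
rewrite mulrA ler_pdivlMr //.
have : 0 <= p ^+ 2 by rewrite exprn_ge0.
nra.
Qed.

End Saturation.

Section ImageExtrema.
Context {R : realType} {T : Type} {P : set T} {g : T -> R} {r : R}.

Lemma ereal_sup_image_EFin : ereal_sup [set (g y)%:E | y in P] = r%:E ->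
  (forall y, P y -> g y <= r) /\ (forall d, 0 < d -> exists2 y, P y & r - d < g y).
Proof.
move=> supE; split=> [y Py|d d0].
  by rewrite -lee_fin -supE; apply: ereal_sup_ubound; exists y.
have supF : ereal_sup [set (g y)%:E | y in P] \is a fin_num by rewrite supE.
have [_ [y Py <-]] := ub_ereal_sup_adherent d0 supF.
by rewrite supE -EFinB lte_fin; exists y.
Qed.

Lemma ereal_inf_image_EFin : ereal_inf [set (g y)%:E | y in P] = r%:E ->
  (forall y, P y -> r <= g y) /\ (forall d, 0 < d -> exists2 y, P y & g y < r + d).
Proof.
move=> infE; split=> [y Py|d d0].
  by rewrite -lee_fin -infE; apply: ereal_inf_lbound; exists y.
have infF : ereal_inf [set (g y)%:E | y in P] \is a fin_num by rewrite infE.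
have [_ [y Py <-]] := lb_ereal_inf_adherent d0 infF.
by rewrite infE -EFinD lte_fin; exists y.
Qed.

End ImageExtrema.

Section NeighbourExtrema.
Context {R : realType} {V : Type} {adj : V -> V -> Prop}.
Context {w : V -> R} {x y0 : V} {c B : R}.
Hypothesis adj_xy0 : adj x y0.

Let nbr_inf := ereal_inf [set (w y)%:E | y in adj x].
Let nbr_sup := ereal_sup [set (w y)%:E | y in adj x].

Let nbr_inf_le : (nbr_inf <= (w y0)%:E)%E.
Proof. by apply: ereal_inf_lbound; exists y0. Qed.

Let nbr_sup_ge : ((w y0)%:E <= nbr_sup)%E.
Proof. by apply: ereal_sup_ubound; exists y0. Qed.

Lemma subsolution_extrema : (forall y, w y <= B) ->
  (- inf_lap adj w x <= c%:E)%E ->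
  exists a b : R, [/\ forall y, adj x y -> a <= w y <= b,
    forall d, 0 < d -> exists2 y, adj x y & b - d < w y &
    2 * w x - a - b <= c].
Proof.
move=> wB; rewrite /inf_lap -/nbr_inf -/nbr_sup.
have : (nbr_sup <= B%:E)%E by apply: ge_ereal_sup => _ [y _ <-]; rewrite lee_fin.
move: nbr_inf_le nbr_sup_ge; rewrite /nbr_inf /nbr_sup.
case supE : ereal_sup => [b| |] //.
case infE : ereal_inf => [a| |] // _ _ _ lap.
have [ab ad] := ereal_inf_image_EFin infE.
have [bb bd] := ereal_sup_image_EFin supE.
exists a, b; split=> // [y xy|]; first by rewrite ab ?bb.
by move: lap; rewrite -!EFinD -EFinN lee_fin; lra.
Qed.

Lemma supersolution_extrema : (forall y, B <= w y) ->
  (c%:E <= - inf_lap adj w x)%E ->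
  exists a b : R, [/\ forall y, adj x y -> a <= w y <= b,
    forall d, 0 < d -> exists2 y, adj x y & w y < a + d &
    c <= 2 * w x - a - b].
Proof.
move=> Bw; rewrite /inf_lap -/nbr_inf -/nbr_sup.
have : (B%:E <= nbr_inf)%E by apply: le_ereal_inf_tmp => _ [y _ <-]; rewrite lee_fin.
move: nbr_inf_le nbr_sup_ge; rewrite /nbr_inf /nbr_sup.
case infE : ereal_inf => [a| |] // _.
case supE : ereal_sup => [b| |] // _ _ lap.
have [ab ad] := ereal_inf_image_EFin infE.
have [bb bd] := ereal_sup_image_EFin supE.
exists a, b; split=> // [y xy|]; first by rewrite ab ?bb.
by move: lap; rewrite -!EFinD -EFinN lee_fin; lra.
Qed.

End NeighbourExtrema.

Lemma width_walk_bound {R : realType} {V : Type} {adj : V -> V -> Prop} {X : set V} :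
  (width R adj X < +oo)%E ->
  exists N, forall x, X x -> exists2 k, (k <= N)%N & walk adj (boundary adj X) [set x] k.
Proof.
move=> wfin.
have [B wB] : exists B : R, (width R adj X < B%:E)%E.
  move: wfin; case: width => [r _| //|_]; last by exists 0; rewrite ltNyr.
  by exists (r + 1); rewrite lte_fin ltrDl.
exists (Num.bound (Num.max B 0)) => x Xx.
have : (gdist R adj (boundary adj X) [set x] < B%:E)%E.
  by apply: le_lt_trans wB; apply: ereal_sup_ubound; exists x.
case/ereal_inf_lt => _ [k walk_k <-]; rewrite lte_fin => kB.
exists k => //; apply/ltnW; rewrite -(ltr_nat R).
apply: lt_trans (archi_boundP _); last by rewrite le_max lexx orbT.
by apply: lt_le_trans kB _; rewrite le_max lexx.
Qed.

Section Comparison.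
Context {R : realType} {V : Type} {adj : V -> V -> Prop} {X : set V}.
Context {f u v : V -> R} {C : R}.
Hypotheses (hv : forall x, - C <= v x) (hu : forall x, u x <= C).
Hypotheses (hf : forall x, X x -> 0 <= f x)
  (hv_super : forall x, X x -> ((f x)%:E <= - inf_lap adj v x)%E)
  (hu_sub : forall x, X x -> (- inf_lap adj u x <= (f x)%:E)%E).
Hypothesis adj_sym : forall x y, adj x y -> adj y x.

Section Perturbation.
Variable eps : R.
Hypotheses (eps0 : 0 < eps) (eps1 : eps <= 1).

Definition phi t := t + eps * sat (t + C).
Definition gap x := u x - phi (v x).

Lemma ler_phi {t1 t2} : - C <= t1 -> t1 <= t2 -> phi t1 <= phi t2.
Proof.
move=> t1C t12; have : sat (t1 + C) <= sat (t2 + C) by apply: ler_sat; lra.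
by move/(ler_wpM2l (ltW eps0)); rewrite /phi; lra.
Qed.

Lemma phi_lipschitz {t1 t2} : - C <= t1 -> t1 <= t2 -> phi t2 - phi t1 <= 2 * (t2 - t1).
Proof.
move=> t1C t12; have : sat (t2 + C) - sat (t1 + C) <= t2 - t1.
  by have := @sat_lipschitz _ (t1 + C) (t2 + C); lra.
have : eps * (t2 - t1) <= t2 - t1 by rewrite ler_piMl //; lra.
by move=> + /(ler_wpM2l (ltW eps0)); rewrite /phi; lra.
Qed.

Lemma phi_ge {t} : - C <= t -> t <= phi t.
Proof.
move=> tC; have : 0 <= sat (t + C) by apply: sat_ge0; lra.
by move/(mulr_ge0 (ltW eps0)); rewrite /phi; lra.
Qed.

Lemma phi_le {t} : - C <= t -> phi t <= t + eps.
Proof.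
move=> tC; have : sat (t + C) <= 1 by apply: sat_le1; lra.
by move/(ler_wpM2l (ltW eps0)); rewrite /phi; lra.
Qed.

Section NearMaximum.
Context {M : R}.
Hypothesis gap_le : forall x, gap x <= M.

Section Neighbourhood.
Context {x y : V} {iu su iv sv : R}.
Hypotheses (xy : adj x y)
  (u_nbr : forall z, adj x z -> iu <= u z <= su)
  (u_sup : forall d, 0 < d -> exists2 z, adj x z & su - d < u z)
  (v_nbr : forall z, adj x z -> iv <= v z <= sv)
  (v_inf : forall d, 0 < d -> exists2 z, adj x z & v z < iv + d)
  (lap_cmp : 2 * u x - iu - su <= 2 * v x - iv - sv)
  (v_lap : iv + sv <= 2 * v x).

Lemma nbr_inf_v_ge : - C <= iv.
Proof.
apply/ler_addgt0Pr => d d0; have [z _ vz] := v_inf _ d0.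
by have := hv z; lra.
Qed.

Lemma spread_ge0 : 0 <= v x - iv.
Proof. by have := v_lap; have /andP[] := v_nbr _ xy; lra. Qed.

Lemma nbr_sup_u_le : su <= M + phi sv.
Proof.
apply/ler_addgt0Pr => d d0; have [z xz uz] := u_sup _ d0.
have /andP[_ vz] := v_nbr _ xz.
by have := ler_phi (hv z) vz; have := gap_le z; rewrite /gap; lra.
Qed.

Lemma nbr_inf_u_le : iu <= M + phi iv.
Proof.
apply/ler_addgt0Pr => e e0.
have e20 : 0 < e / 2 by rewrite divr_gt0.
have [z xz vz] := v_inf _ e20; have /andP[uz _] := u_nbr _ xz.
have := ler_phi (hv z) (ltW vz).
have := phi_lipschitz nbr_inf_v_ge (_ : iv <= iv + e / 2).
by have := gap_le z; rewrite /gap; lra.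
Qed.

Lemma sat_nbr_sup_v_le : sat (sv + C) <= sat (v x + C + (v x - iv)).
Proof.
have /andP[_ vy] := v_nbr _ xy.
by apply: ler_sat; have := hv y; have := v_lap; lra.
Qed.

Lemma spread_sq_le A : v x + C + 1 <= A ->
  eps * (v x - iv) ^+ 2 <= 2 * A ^+ 3 * (M - gap x).
Proof.
move=> xA; set p := v x - iv.
set D := 2 * sat (v x + C) - sat (iv + C) - sat (sv + C).
have A3 : 0 <= A ^+ 3 by rewrite exprn_ge0 //; have := hv x; lra.
have epsD : eps * D <= 2 * (M - gap x).
  have := nbr_sup_u_le; have := nbr_inf_u_le; have := lap_cmp.
  by rewrite /D /gap /phi; lra.
have pD : p ^+ 2 <= A ^+ 3 * D.
  have pC : p <= v x + C by have := nbr_inf_v_ge; rewrite /p; lra.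
  have := sat_second_diff spread_ge0 pC xA.
  have -> : v x + C - (v x - iv) = iv + C by ring.
  move/le_trans; apply.
  by apply: ler_wpM2l => //; have := sat_nbr_sup_v_le; rewrite /D; lra.
have := ler_wpM2l A3 epsD; have := ler_wpM2l (ltW eps0) pD.
by rewrite mulrCA; lra.
Qed.

Lemma gap_nbr_ge : 2 * gap x - M - 4 * (v x - iv) <= gap y.
Proof.
have p0 := spread_ge0.
have sat_diff : sat (sv + C) - sat (v x + C) <= v x - iv.
  have := @sat_lipschitz _ (v x + C) (v x + C + (v x - iv)).
  by have := sat_nbr_sup_v_le; have := hv x; lra.
have phi_diff : phi sv - phi (v x) <= sv - v x + (v x - iv).
  have : eps * (v x - iv) <= v x - iv by rewrite ler_piMl.
  by have := ler_wpM2l (ltW eps0) sat_diff; rewrite /phi; lra.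
have /andP[uy _] := u_nbr _ xy; have /andP[_ vy] := v_nbr _ xy.
have := ler_phi (hv y) vy; have := nbr_sup_u_le; have := lap_cmp; have := v_lap.
by rewrite /gap; lra.
Qed.

Lemma gap_nbr_spread A : v x + C + 1 <= A ->
  exists2 p, 0 <= p /\ eps * p ^+ 2 <= 2 * A ^+ 3 * (M - gap x) &
    2 * gap x - M - 4 * p <= gap y.
Proof.
by move=> xA; exists (v x - iv); [split; [exact: spread_ge0|exact: spread_sq_le]|
  exact: gap_nbr_ge].
Qed.

End Neighbourhood.

Lemma near_max_propagates {eta} : 0 < eta -> exists2 rho, 0 < rho <= eta &
  forall x, X x -> M - rho <= gap x -> forall y, adj x y -> M - eta <= gap y.
Proof.
(* [A] bounds [v x + C + 1] at near-maximal [x], as [gap x <= C - v x]; [K] is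
   chosen so that [eps * p ^+ 2 <= 2 * A ^+ 3 * K] forces [p <= eta / 8]. *)
move=> eta0; pose A := Num.max (2 * C + 2 - M) 1.
have A1 : 1 <= A by rewrite le_max lexx orbT.
have A3 : 0 < A ^+ 3 by rewrite exprn_gt0 //; lra.
pose K := eps * (eta / 8) ^+ 2 / (2 * A ^+ 3).
have K0 : 0 < K by rewrite divr_gt0 ?mulr_gt0 ?exprn_gt0 //; lra.
have KE : 2 * A ^+ 3 * K = eps * (eta / 8) ^+ 2 by rewrite /K; field; lra.
pose rho := Num.min (Num.min (eta / 4) 1) K.
have rho_eta : rho <= eta / 4 by rewrite !ge_min lexx.
have rho1 : rho <= 1 by rewrite !ge_min lexx orbT.
have rhoK : rho <= K by rewrite ge_min lexx orbT.
exists rho; first by apply/andP; split; rewrite ?lt_min ?K0 ?andbT; lra.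
move=> x Xx near y xy.
have [iu [su [u_nbr u_sup lap_u]]] := subsolution_extrema xy hu (hu_sub x Xx).
have [iv [sv [v_nbr v_inf lap_v]]] := supersolution_extrema xy hv (hv_super x Xx).
have xA : v x + C + 1 <= A.
  have : 2 * C + 2 - M <= A by rewrite le_max lexx.
  by have := phi_ge (hv x); have := hu x; rewrite /gap in near; lra.
have fx0 := hf x Xx.
have lap_cmp : 2 * u x - iu - su <= 2 * v x - iv - sv by lra.
have v_lap : iv + sv <= 2 * v x by lra.
have [p [p0 pM] gap_y] :=
  gap_nbr_spread xy u_nbr u_sup v_nbr v_inf lap_cmp v_lap A xA.
suff : p <= eta / 8 by lra.
have : p ^+ 2 <= (eta / 8) ^+ 2.
  rewrite -(ler_pM2l eps0) -KE; apply: le_trans pM _.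
  by rewrite ler_wpM2l ?mulr_ge0 ?exprn_ge0 //; lra.
by rewrite ler_sqr ?nnegrE //; lra.
Qed.

Lemma near_max_escapes n {eta} : 0 < eta -> exists2 rho, 0 < rho <= eta &
  forall x, M - rho <= gap x ->
  (exists2 k, (k <= n)%N & walk adj (boundary adj X) [set x] k) ->
  exists2 z, ~ X z & M - eta <= gap z.
Proof.
elim: n eta => [|n IHn] eta eta0.
  exists eta => [|x near [k]]; first by rewrite eta0 lexx.
  rewrite leqn0 => /eqP-> [p [[nXp _] [p0x _]]].
  by exists x; rewrite // -p0x.
have [rho' /andP[rho'0 rho'_eta] escape'] := IHn eta eta0.
have [rho /andP[rho0 rho_rho'] propagate] := near_max_propagates rho'0.
exists rho => [|x near [k kn [p [p0 [pk p_adj]]]]].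
  by rewrite rho0 (le_trans rho_rho').
have [Xx|nXx] := pselect (X x); last first.
  by exists x => //; apply: le_trans near; rewrite lerD2l lerN2 (le_trans rho_rho').
case: k kn pk p_adj => [|k] kn pk p_adj; first by case: p0; rewrite pk.
have x_pk : adj x (p k) by apply: adj_sym; rewrite -pk; apply: p_adj.
apply: (escape' (p k)); first exact: propagate Xx near _ x_pk.
by exists k => //; exists p; do 2!split=> //; move=> i ik; exact/p_adj/ltnW.
Qed.

End NearMaximum.
End Perturbation.

Lemma diff_le_off_X {N} :
  (forall x, X x -> exists2 k, (k <= N)%N & walk adj (boundary adj X) [set x] k) ->
  forall x e, 0 < e -> exists2 z, ~ X z & u x - v x - e <= u z - v z.
Proof.
move=> reach x e e0; pose eps := Num.min (e / 2) 1.
have eps0 : 0 < eps by rewrite lt_min ltr01 andbT divr_gt0.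
have eps1 : eps <= 1 by rewrite ge_min lexx orbT.
have eps_e : eps <= e / 2 by rewrite ge_min lexx.
have gap_sup : has_sup (range (gap eps)).
  split; first by exists (gap eps x), x.
  exists (C + C) => _ [y _ <-]; rewrite /gap.
  by have := phi_ge eps eps0 (hv y); have := hu y; have := hv y; lra.
pose M := sup (range (gap eps)).
have gap_le : forall y, gap eps y <= M by move=> y; apply: sup_upper_bound => //; exists y.
have e2 : 0 < e / 2 by rewrite divr_gt0.
have [rho /andP[rho0 rho_e] escape] := near_max_escapes eps eps0 eps1 gap_le N e2.
have [_ [x0 _ <-]] := sup_adherent rho0 gap_sup; rewrite -/M => x0_near.
have [z nXz z_near] : exists2 z, ~ X z & M - e / 2 <= gap eps z.
  have [Xx0|nXx0] := pselect (X x0); last by exists x0 => //; lra.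
  by apply: escape; [lra | exact: reach].
exists z => //.
have := phi_ge eps eps0 (hv z); have := phi_le eps eps0 (hv x); have := gap_le x.
by move: z_near; rewrite /gap; lra.
Qed.

End Comparison.

Theorem theorem1p2 (R : realType) (V : Type) (adj : V -> V -> Prop)
  (adj_sym : forall x y, adj x y -> adj y x)
  (adj_irr : forall x, ~ adj x x)
  (X : set V) (hwidth : (width R adj X < +oo)%E)
  (f : V -> R) (hf : forall x, X x -> 0 <= f x)
  (u v : V -> R) (C : R) (hC : 0 < C)
  (hv : forall x, - C <= v x) (hu : forall x, u x <= C)
  (hv_super : forall x, X x -> ((f x)%:E <= - inf_lap adj v x)%E)
  (hu_sub : forall x, X x -> (- inf_lap adj u x <= (f x)%:E)%E) :
  ereal_sup [set (u x - v x)%:E | x in [set: V]] =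
  ereal_sup [set (u x - v x)%:E | x in ~` X].
Proof.
have [N reach] := width_walk_bound hwidth.
apply/eqP; rewrite eq_le; apply/andP; split; last first.
  by apply: ereal_sup_le => _ [x nXx <-]; exists x.
apply: ge_ereal_sup => _ [x _ <-]; apply/lee_subgt0Pr => e e0.
have [z nXz uvz] := diff_le_off_X hv hu hf hv_super hu_sub adj_sym reach x e e0.
apply: le_trans (ereal_sup_ubound _); last by exists z.
by rewrite -EFinB lee_fin.
Qed.
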